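(* In the social learning model, suppose the left tail of $G_-$ is convex and differentiable. Then the map $u_+(x)=x+D_+(x)$ is monotone increasing on $(x_1,\infty)$ for some $x_1\in\mathbb{R}$.
   Context: Social learning model. A state $\theta\in\{-1,+1\}$ is drawn with $\mathbb{P}(\theta=+1)=\mathbb{P}(\theta=-1)=1/2$. Agents $t=1,2,\dots$ receive private signals $s_t\in\mathbb{R}$ that are i.i.d. conditionally on $\theta$, with CDF $F_+$ if $\theta=+1$ and $F_-$ if $\theta=-1$; $F_+$ and $F_-$ are mutually absolutely continuous. Let $L_t=\log\frac{\mathbb{P}(\theta=+1\mid s_t)}{\mathbb{P}(\theta=-1\mid s_t)}$ be the private log-likelihood ratio, and let $G_+$, $G_-$ denote the CDFs of $L_t$ conditional on $\theta=+1$, $\theta=-1$ respectively. Signals are assumed unbounded: for every $M\in\mathbb{R}$, $\mathbb{P}(L_t>M)>0$ and $\mathbb{P}(L_t<-M)>0$. Agent $t$ observes $a_1,\dots,a_{t-1}$ and her own signal and chooses $a_t\in\{-1,+1\}$ (utility $1$ if $a_t=\theta$, else $0$). The public belief is $\mu_t=\mathbb{P}(\theta=+1\mid a_1,\dots,a_{t-1})$ and $\ell_t=\log\frac{\mu_t}{1-\mu_t}$ (so $\ell_1=0$). In equilibrium $a_t=+1$ iff $\ell_t+L_t>0$, and otherwise $a_t=-1$. Consequently $\ell_{t+1}=\ell_t+D_+(\ell_t)$ if $a_t=+1$ and $\ell_{t+1}=\ell_t+D_-(\ell_t)$ if $a_t=-1$, where $D_+(x)=\log\frac{1-G_+(-x)}{1-G_-(-x)}$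 and $D_-(x)=\log\frac{G_+(-x)}{G_-(-x)}$. We write $\mathbb{P}_+(\cdot)=\mathbb{P}(\cdot\mid\theta=+1)$ and $\mathbb{E}_+$ for the corresponding expectation. ''The left tail of $G_-$ is convex and differentiable'' means: there exists $x_0\in\mathbb{R}$ such that the restriction of $G_-$ to $(-\infty,x_0)$ is convex and differentiable. *)

From Stdlib Require Import Reals.
Open Scope R_scope.

Definition is_cdf (G : R -> R) : Prop :=
  (forall x y, x <= y -> G x <= G y) /\
  (forall x eps, 0 < eps -> exists delta, 0 < delta /\
       forall y, x <= y < x + delta -> Rabs (G y - G x) < eps) /\
  (forall eps, 0 < eps -> exists M, forall x, x <= M -> Rabs (G x) < eps) /\
  (forall eps, 0 < eps -> exists M, forall x, M <= x -> Rabs (G x - 1) < eps).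

(* (G_minus, G_plus) are the CDFs of the private log-likelihood ratio
   L = log dF_+/dF_- (prior 1/2) under theta = -1 and theta = +1.
   This is exactly the statement dG_+(t) = e^t dG_-(t) of measures on R,
   written out on half-open intervals (a,b]:
     G_+(b) - G_+(a) = \int_(a,b] e^t dG_-(t),
   which (e^t being increasing and continuous) is equivalent to the sandwich
     e^a (G_-(b)-G_-(a)) <= G_+(b)-G_+(a) <= e^b (G_-(b)-G_-(a)) for all a<b. *)
Definition llr_cdf_pair (Gm Gp : R -> R) : Prop :=
  is_cdf Gm /\ is_cdf Gp /\
  (forall a b, a < b ->
     exp a * (Gm b - Gm a) <= Gp b - Gp a /\
     Gp b - Gp a <= exp b * (Gm b - Gm a)).

(* Unbounded signals: P(L > M) > 0 and P(L < -M) > 0 for every M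
   (under either state; the two laws are mutually absolutely continuous). *)
Definition unbounded_signals (Gm : R -> R) : Prop :=
  forall M, 0 < 1 - Gm M /\ exists y, y < - M /\ 0 < Gm y.

Definition D_plus (Gm Gp : R -> R) (x : R) : R :=
  ln ((1 - Gp (- x)) / (1 - Gm (- x))).

Definition u_plus (Gm Gp : R -> R) (x : R) : R := x + D_plus Gm Gp x.

Definition left_tail_convex_differentiable (G : R -> R) : Prop :=
  exists x0 : R,
    (forall x y t, x < x0 -> y < x0 -> 0 <= t <= 1 ->
        G (t * x + (1 - t) * y) <= t * G x + (1 - t) * G y) /\
    (forall x, x < x0 -> exists l, derivable_pt_lim G x l).

(* Write [S(z) = 1 - G_-(z)] and [T(z) = 1 - G_+(z)], so that
   [u_+(x) = x + ln (T(-x) / S(-x))].  For [x <= y] put [d = y - x].  Convexity of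
   [G_-] on its left tail bounds the chord slope on [[-y, -x]] by the slope on
   [[-x, -x + 1]], which is at most [S(-x)]; hence [S(-y) <= (1 + d) S(-x) <= e^d S(-x)].
   Since [T] is nonincreasing, [T(-x) <= T(-y)], and together
   [T(-x) / S(-x) <= e^d T(-y) / S(-y)], which is [u_+(x) <= u_+(y)] after taking logs. *)

From Stdlib Require Import Reals Lra.
Open Scope R_scope.

Lemma cdf_le1 (G : R -> R) : is_cdf G -> forall x, G x <= 1.
Proof.
  intros [G_mono [_ [_ G_top]]] x.
  destruct (Rle_or_lt (G x) 1) as [Hx | Hx]; [exact Hx |].
  destruct (G_top (G x - 1)) as [M HM]; [lra |].
  pose proof (HM (Rmax x M) (Rmax_r x M)) as H1.
  pose proof (G_mono x (Rmax x M) (Rmax_l x M)) as H2.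
  rewrite Rabs_right in H1 by lra.
  lra.
Qed.

Lemma cdf_exists_gt (G : R -> R) (z : R) :
  is_cdf G -> G z < 1 -> exists b, z < b /\ G z < G b.
Proof.
  intros [_ [_ [_ G_top]]] Hz.
  destruct (G_top ((1 - G z) / 2)) as [M HM]; [lra |].
  exists (Rmax (z + 1) M).
  pose proof (Rmax_l (z + 1) M).
  pose proof (HM (Rmax (z + 1) M) (Rmax_r _ _)) as HG.
  apply Rabs_def2 in HG.
  lra.
Qed.

Lemma llr_cdf_pair_lt1 (Gm Gp : R -> R) :
  llr_cdf_pair Gm Gp -> (forall z, Gm z < 1) -> forall z, Gp z < 1.
Proof.
  intros [Gm_cdf [Gp_cdf sandwich]] Gm_lt1 z.
  destruct (cdf_exists_gt Gm z Gm_cdf (Gm_lt1 z)) as [b [Hzb HGb]].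
  destruct (sandwich z b Hzb) as [Hlow _].
  assert (0 < exp z * (Gm b - Gm z)) by (apply Rmult_lt_0_compat; [apply exp_pos | lra]).
  pose proof (cdf_le1 Gp Gp_cdf b).
  lra.
Qed.

Section ConvexLeftTail.

Variables (G : R -> R) (x0 : R).

Hypothesis G_convex : forall x y t, x < x0 -> y < x0 -> 0 <= t <= 1 ->
  G (t * x + (1 - t) * y) <= t * G x + (1 - t) * G y.

Lemma convex_slope_le a b c :
  a <= b < c -> c < x0 -> (c - b) * (G b - G a) <= (b - a) * (G c - G b).
Proof.
  intros [Hab Hbc] Hc.
  set (t := (c - b) / (c - a)).
  assert (Ht : t * (c - a) = c - b) by (unfold t; field; lra).
  assert (Ht01 : 0 <= t <= 1) by (split; nra).
  assert (Hb : t * a + (1 - t) * c = b) by nra.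
  pose proof (G_convex a c t ltac:(lra) Hc Ht01) as Hconv.
  rewrite Hb in Hconv.
  nra.
Qed.

Lemma convex_survival_le (G_le1 : forall x, G x <= 1) a b :
  a <= b -> b + 1 < x0 -> 1 - G a <= (1 + (b - a)) * (1 - G b).
Proof.
  intros Hab Hb.
  pose proof (convex_slope_le a b (b + 1) ltac:(lra) Hb) as Hslope.
  pose proof (G_le1 (b + 1)).
  nra.
Qed.

End ConvexLeftTail.

Lemma ln_ratio_le_shift (A A' B B' d : R) :
  0 < A -> A <= A' -> 0 < B -> 0 < B' -> B' <= (1 + d) * B ->
  ln (A / B) <= d + ln (A' / B').
Proof.
  intros HA HAA' HB HB' HBB'.
  assert (Hd : 0 < 1 + d) by nra.
  pose proof (exp_ineq1_le d).
  assert (Hratio : A / B <= exp d * (A' / B')).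
  { apply (Rmult_le_reg_r (B * B')); [nra |].
    replace (A / B * (B * B')) with (A * B') by (field; lra).
    replace (exp d * (A' / B') * (B * B')) with (exp d * A' * B) by (field; lra).
    assert (A * B' <= (1 + d) * (A * B)) by nra.
    assert ((1 + d) * (A * B) <= exp d * (A * B))
      by (apply Rmult_le_compat_r; [apply Rmult_le_pos |]; lra).
    assert (exp d * (A * B) <= exp d * (A' * B))
      by (apply Rmult_le_compat_l; [apply Rlt_le, exp_pos | apply Rmult_le_compat_r]; lra).
    lra. }
  assert (0 < A / B) by (apply Rdiv_lt_0_compat; lra).
  rewrite <- (ln_exp d), <- ln_mult by (try apply exp_pos; apply Rdiv_lt_0_compat; lra).
  destruct Hratio as [Hlt | ->]; [left; apply ln_increasing; lra | lra].
Qed.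

Theorem lemma5 (Gm Gp : R -> R) :
  llr_cdf_pair Gm Gp ->
  unbounded_signals Gm ->
  left_tail_convex_differentiable Gm ->
  exists x1 : R, forall x y, x1 < x -> x <= y -> u_plus Gm Gp x <= u_plus Gm Gp y.
Proof.
  intros Hpair Hunb [x0 [Gm_convex _]].
  pose proof Hpair as [Gm_cdf [Gp_cdf _]].
  assert (Gm_lt1 : forall z, Gm z < 1) by (intro z; destruct (Hunb z); lra).
  pose proof (llr_cdf_pair_lt1 Gm Gp Hpair Gm_lt1) as Gp_lt1.
  exists (1 - x0).
  intros x y Hx Hxy.
  assert (Gp_mono : Gp (- y) <= Gp (- x)) by (apply (proj1 Gp_cdf); lra).
  assert (Gm_survival : 1 - Gm (- y) <= (1 + (y - x)) * (1 - Gm (- x))).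
  { replace (y - x) with (- x - - y) by ring.
    apply (convex_survival_le Gm x0 Gm_convex (cdf_le1 Gm Gm_cdf)); lra. }
  pose proof (Gp_lt1 (- x)); pose proof (Gm_lt1 (- x)); pose proof (Gm_lt1 (- y)).
  assert (Hln : ln ((1 - Gp (- x)) / (1 - Gm (- x)))
                <= (y - x) + ln ((1 - Gp (- y)) / (1 - Gm (- y))))
    by (apply ln_ratio_le_shift; lra).
  unfold u_plus, D_plus.
  lra.
Qed.
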